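(* For every integer $p\geq1$ and every $\alpha>0$ there exists $C=C(\alpha,p)>0$ such that the following holds. Let $\pi$ be the Ising measure on $N$ spins (no external field) with couplings $\{J_{ij}\}$, and let $\tilde\pi$ be the Ising measure with couplings $\{|J_{ij}|\}$. Suppose $\tilde\pi$ is $(1-\alpha/N)$-contracting. Let $B=(b_{i_1,\dots,i_p})$ be a real tensor of order $p$ indexed by $\{1,\dots,N\}^p$ and $h(\sigma)=\sum_{i_1,\dots,i_p}b_{i_1,\dots,i_p}\sigma_{i_1}\cdots\sigma_{i_p}$. Then $$|\mathbb E_\pi[h(\sigma)]|\leq C\,\|B\|_\infty\,N^{p/2},$$ where $\|B\|_\infty=\max_{i_1,\dots,i_p}|b_{i_1,\dots,i_p}|$.
   Context: Spin configurations are $\sigma\in\Omega_N=\{\pm1\}^N$. For real couplings $\{J_{ij}\}$, the Ising measure (no external field) is $\pi(\sigma)=\mathcal Z^{-1}\exp\big(\sum_{i,j}J_{ij}\sigma_i\sigma_j\big)$. An Ising measure is $\theta$-contracting if there is a discrete-time Markov chain on $\Omega_N$ with that stationary measure, changing at most one coordinate per step, such that $\max_{\sigma,\sigma':\|\sigma-\sigma'\|_1=1}W_1(\mathbb P_\sigma(X_1\in\cdot),\mathbb P_{\sigma'}(X_1\in\cdot))\leq\theta<1$, with $W_1$ the $L^1$-Wasserstein distance w.r.t. $\|\cdot\|_1$. *)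

From Stdlib Require Import Reals.
From mathcomp Require Import all_boot.
Set Implicit Arguments. Unset Strict Implicit. Unset Printing Implicit Defensive.
Local Open Scope R_scope.

Definition config (N : nat) := {ffun 'I_N -> bool}.

Definition spin (N : nat) (s : config N) (i : 'I_N) : R :=
  if s i then R1 else (- R1).

Notation "\rsum_ ( x : T ) F" := (\big[Rplus/R0]_(x : T) F)
  (at level 41, F at level 41, x, T at level 50).
Notation "\rprod_ ( x : T ) F" := (\big[Rmult/R1]_(x : T) F)
  (at level 36, F at level 36, x, T at level 50).

(* Hamming distance = ||.||_1 on configurations, normalised so that
   configurations differing in one coordinate are at distance 1. *)
Definition hamming (N : nat) (s t : config N) : nat := #|[set i | s i != t i]|.
Definition dist (N : nat) (s t : config N) : R := INR (hamming s t).

Definition ising_H (N : nat) (J : 'I_N -> 'I_N -> R) (s : config N) : R :=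
  \rsum_(i : 'I_N) \rsum_(j : 'I_N) (J i j * spin s i * spin s j).
Definition ising_Z (N : nat) (J : 'I_N -> 'I_N -> R) : R :=
  \rsum_(s : config N) exp (ising_H J s).
Definition ising (N : nat) (J : 'I_N -> 'I_N -> R) (s : config N) : R :=
  exp (ising_H J s) / ising_Z J.

Definition expect (N : nat) (mu : config N -> R) (f : config N -> R) : R :=
  \rsum_(s : config N) (mu s * f s).

Definition coupling (N : nat) (mu nu : config N -> R)
  (gamma : config N -> config N -> R) : Prop :=
  (forall x y, 0 <= gamma x y) /\
  (forall x, \rsum_(y : config N) gamma x y = mu x) /\
  (forall y, \rsum_(x : config N) gamma x y = nu y).

(* W_1(mu, nu) <= theta, where W_1 is the infimum over couplings of the
   expected distance: for every eps > 0 some coupling has cost <= theta+eps. *)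
Definition W1_le (N : nat) (mu nu : config N -> R) (theta : R) : Prop :=
  forall eps : R, (0 < eps) ->
  exists gamma, coupling mu nu gamma /\
    (\rsum_(x : config N) \rsum_(y : config N) (gamma x y * dist x y)
       <= theta + eps).

Definition markov_kernel (N : nat) (P : config N -> config N -> R) : Prop :=
  (forall x y, 0 <= P x y) /\
  (forall x, \rsum_(y : config N) P x y = R1).

Definition stationary (N : nat) (pi : config N -> R)
  (P : config N -> config N -> R) : Prop :=
  forall y, \rsum_(x : config N) (pi x * P x y) = pi y.

Definition single_site (N : nat) (P : config N -> config N -> R) : Prop :=
  forall x y, P x y <> R0 -> (hamming x y <= 1)%N.

Definition contracting (N : nat) (pi : config N -> R) (theta : R) : Prop :=
  (theta < 1) /\
  exists P : config N -> config N -> R,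
    markov_kernel P /\ stationary pi P /\ single_site P /\
    forall s s' : config N, hamming s s' = 1%N -> W1_le (P s) (P s') theta.

Definition tensor_poly (N p : nat) (B : {ffun 'I_p -> 'I_N} -> R)
  (s : config N) : R :=
  \rsum_(idx : {ffun 'I_p -> 'I_N}) (B idx * \rprod_(k : 'I_p) spin s (idx k)).

Definition tensor_supnorm (N p : nat) (B : {ffun 'I_p -> 'I_N} -> R) : R :=
  \big[Rmax/R0]_(idx : {ffun 'I_p -> 'I_N}) Rabs (B idx).

(* Expanding h, E[h] is a combination of spin moments E[sigma_A] with
   coefficients bounded by |B|.  By Ginibre's inequality (Griffiths' positivity
   applied to the duplicated system) |E_J[sigma_A]| <= E_|J|[sigma_A], so
   |E_J[h]| <= |B| sum_A E_|J|[sigma_A] = |B| E_|J|[M^p], where M is the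
   magnetization.  Under |J|, M is centred (spin-flip symmetry) and 2-Lipschitz
   for the Hamming distance.  Each step of the contracting single-site chain
   multiplies Lipschitz constants by theta = 1 - alpha/N, and Hoeffding's lemma
   along the chain gives E[exp(lam M)] <= exp(1/4 + 32 lam^2 / (1 - theta)),
   which is O(1) for lam = sqrt(alpha/N)/8; hence E|M|^p = O(N^(p/2)). *)

From HB Require Import structures.
From Pilot Require Import Defs.
From Stdlib Require Import Reals Lra.
From mathcomp Require Import all_boot.
Set Implicit Arguments. Unset Strict Implicit.
Local Open Scope R_scope.

Lemma Rplus_0_l' : left_id R0 Rplus. Proof. move=> x; lra. Qed.
Lemma Rmult_1_l' : left_id R1 Rmult. Proof. move=> x; lra. Qed.
Lemma Rplus_A : associative Rplus. Proof. move=> x y z; lra. Qed.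
Lemma Rplus_C : commutative Rplus. Proof. move=> x y; lra. Qed.
Lemma Rmult_A : associative Rmult. Proof. move=> x y z; ring. Qed.
Lemma Rmult_C : commutative Rmult. Proof. move=> x y; ring. Qed.
Lemma Rmult_0_l' : left_zero R0 Rmult. Proof. move=> x; ring. Qed.
Lemma Rmult_0_r' : right_zero R0 Rmult. Proof. move=> x; ring. Qed.
Lemma Rmult_Dl : left_distributive Rmult Rplus. Proof. move=> x y z; ring. Qed.
Lemma Rmult_Dr : right_distributive Rmult Rplus. Proof. move=> x y z; ring. Qed.
HB.instance Definition _ := Monoid.isComLaw.Build R R0 Rplus Rplus_A Rplus_C Rplus_0_l'.
HB.instance Definition _ := Monoid.isComLaw.Build R R1 Rmult Rmult_A Rmult_C Rmult_1_l'.
HB.instance Definition _ := Monoid.isMulLaw.Build R R0 Rmult Rmult_0_l' Rmult_0_r'.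
HB.instance Definition _ := Monoid.isAddLaw.Build R Rmult Rplus Rmult_Dl Rmult_Dr.

Lemma rsum_ge0 (I : finType) (F : I -> R) :
  (forall i, 0 <= F i) -> 0 <= \rsum_(i : I) F i.
Proof. by move=> F0; apply: (big_ind (fun x => 0 <= x)) => //; [lra | move=> *; lra]. Qed.

Lemma rprod_ge0 (I : finType) (F : I -> R) :
  (forall i, 0 <= F i) -> 0 <= \rprod_(i : I) F i.
Proof. by move=> F0; apply: (big_ind (fun x => 0 <= x)) => //; [lra | move=> *; nra]. Qed.

Lemma rsum_le (I : finType) (F G : I -> R) :
  (forall i, F i <= G i) -> \rsum_(i : I) F i <= \rsum_(i : I) G i.
Proof. by move=> FG; apply: (big_ind2 (fun x y => x <= y)) => //; [lra | move=> *; lra]. Qed.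

Lemma Rabs_rsum_le (I : finType) (F : I -> R) :
  Rabs (\rsum_(i : I) F i) <= \rsum_(i : I) Rabs (F i).
Proof.
apply: (big_ind2 (fun x y => Rabs x <= y)) => [|a b c d ab cd|i _]; last lra.
- rewrite Rabs_R0; lra.
- have := Rabs_triang a c; lra.
Qed.

Lemma rsum_opp (I : finType) (F : I -> R) :
  \rsum_(i : I) (- F i) = - \rsum_(i : I) F i.
Proof.
rewrite (big_morph Ropp (id2 := R0) (op2 := Rplus) (id1 := R0) (op1 := Rplus)) //.
- by move=> x y; rewrite Ropp_plus_distr.
- by rewrite Ropp_0.
Qed.

Lemma rsum_scale (I : finType) (a : R) (F : I -> R) :
  \rsum_(i : I) (a * F i) = a * \rsum_(i : I) F i.
Proof. by rewrite big_distrr. Qed.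

Lemma rsum_scale_r (I : finType) (a : R) (F : I -> R) :
  \rsum_(i : I) (F i * a) = (\rsum_(i : I) F i) * a.
Proof. by rewrite big_distrl. Qed.

Lemma rsum_add (I : finType) (F G : I -> R) :
  \rsum_(i : I) (F i + G i) = \rsum_(i : I) F i + \rsum_(i : I) G i.
Proof. exact: big_split. Qed.

Lemma rsum_sub (I : finType) (F G : I -> R) :
  \rsum_(i : I) (F i - G i) = \rsum_(i : I) F i - \rsum_(i : I) G i.
Proof. by rewrite rsum_add rsum_opp. Qed.

Lemma exp_rsum (I : finType) (F : I -> R) :
  exp (\rsum_(i : I) F i) = \rprod_(i : I) exp (F i).
Proof.
rewrite (big_morph exp (id2 := R0) (op2 := Rplus) (id1 := R1) (op1 := Rmult)) //.
- by move=> x y; rewrite exp_plus.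
- by rewrite exp_0.
Qed.

Lemma iter_Rplus (n : nat) (c : R) : iter n (Rplus c) 0 = INR n * c.
Proof. by elim: n => [|n IH]; rewrite ?iterS ?IH ?S_INR /=; lra. Qed.

Lemma rprod_const_ord (n : nat) (c : R) : \rprod_(i : 'I_n) c = c ^ n.
Proof. by rewrite big_const_ord; elim: n => [|n IH] //; rewrite iterS IH. Qed.

Lemma Rabs_rprod_le1 (I : finType) (F : I -> R) :
  (forall i, Rabs (F i) <= 1) -> Rabs (\rprod_(i : I) F i) <= 1.
Proof.
move=> F1; apply: (big_ind (fun x => Rabs x <= 1)) => // [|x y x1 y1].
  rewrite Rabs_R1; lra.
by rewrite Rabs_mult; have := Rabs_pos x; have := Rabs_pos y; nra.
Qed.

Lemma rsum_prob_le (I : finType) (pi F : I -> R) (c : R) :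
  (forall i, 0 <= pi i) -> \rsum_(i : I) pi i = 1 ->
  (forall i, F i <= c) -> \rsum_(i : I) (pi i * F i) <= c.
Proof.
move=> pi0 pi1 Fc; apply: (@Rle_trans _ (\rsum_(i : I) (c * pi i))).
  by apply: rsum_le => i; rewrite Rmult_comm; apply: Rmult_le_compat_r.
by rewrite rsum_scale pi1 Rmult_1_r; lra.
Qed.

Lemma exp_le_compat x y : x <= y -> exp x <= exp y.
Proof. by case/Rle_lt_or_eq_dec => [/exp_increasing | ->]; lra. Qed.

Lemma spin_cases (N : nat) (s : config N) (i : 'I_N) : spin s i = 1 \/ spin s i = -1.
Proof. by rewrite /spin; case: (s i); [left | right]. Qed.

Lemma Rabs_spin (N : nat) (s : config N) (i : 'I_N) : Rabs (spin s i) = 1.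
Proof. by case: (spin_cases s i) => ->; rewrite ?Rabs_Ropp Rabs_R1. Qed.

Definition spin_prod (N : nat) (I : finType) (a : I -> 'I_N) (s : config N) : R :=
  \rprod_(k : I) spin s (a k).

Lemma Rabs_spin_prod_le1 (N : nat) (I : finType) (a : I -> 'I_N) s :
  Rabs (spin_prod a s) <= 1.
Proof. by apply: Rabs_rprod_le1 => k; rewrite Rabs_spin; lra. Qed.

Definition monomial (N : nat) (m : 'I_N -> nat) (s : config N) : R :=
  \rprod_(i : 'I_N) spin s i ^ m i.

Lemma monomialD (N : nat) (m1 m2 : 'I_N -> nat) s :
  monomial (fun i => (m1 i + m2 i)%nat) s = monomial m1 s * monomial m2 s.
Proof. by rewrite /monomial -big_split; apply: eq_bigr => i _; rewrite pow_add. Qed.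

(* The sum over configurations factorises over the sites, and each factor is
   [1 + (-1)^(m i)] >= 0. *)
Lemma rsum_monomial_ge0 (N : nat) (m : 'I_N -> nat) :
  0 <= \rsum_(s : config N) monomial m s.
Proof.
rewrite /monomial.
have -> : \rsum_(s : config N) \rprod_(i : 'I_N) spin s i ^ m i =
   \rprod_(i : 'I_N) \rsum_(b : bool) ((if b then R1 else - R1) ^ m i).
  by rewrite bigA_distr_bigA.
apply: rprod_ge0 => i; rewrite /index_enum !unlock /= Rplus_0_r pow1.
have := Rle_abs (- (- R1) ^ m i); rewrite Rabs_Ropp -RPow_abs Rabs_Ropp Rabs_R1 pow1; lra.
Qed.

Definition monomial_cone (N : nat) (f : config N -> R) : Prop :=
  exists (I : finType) (c : I -> R) (m : I -> 'I_N -> nat),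
    (forall x, 0 <= c x) /\ forall s, f s = \rsum_(x : I) (c x * monomial (m x) s).

Section MonomialCone.
Variable N : nat.
Implicit Types f g : config N -> R.

Lemma monomial_cone_ext f g : monomial_cone f -> f =1 g -> monomial_cone g.
Proof. by move=> [I [c [m [c0 Ef]]]] fg; exists I, c, m; split => // s; rewrite -fg. Qed.

Lemma rsum_monomial_cone_ge0 f : monomial_cone f -> 0 <= \rsum_(s : config N) f s.
Proof.
move=> [I [c [m [c0 Ef]]]].
rewrite (eq_bigr _ (fun s _ => Ef s)) exchange_big /=.
apply: rsum_ge0 => x; rewrite rsum_scale.
exact: Rmult_le_pos (c0 x) (rsum_monomial_ge0 _).
Qed.

Lemma monomial_cone_monomial (m : 'I_N -> nat) : monomial_cone (monomial m).
Proof.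
exists unit, (fun _ => R1), (fun _ => m); split => [_ | s]; first lra.
by rewrite /index_enum !unlock /=; ring.
Qed.

Lemma monomial_cone1 : monomial_cone (fun _ : config N => 1).
Proof.
apply: monomial_cone_ext (monomial_cone_monomial (fun _ => 0%nat)) _ => s.
by rewrite /monomial big1.
Qed.

Lemma monomial_cone_spin (i : 'I_N) : monomial_cone (fun s => spin s i).
Proof.
apply: monomial_cone_ext (monomial_cone_monomial (fun k => nat_of_bool (k == i))) _ => s.
rewrite /monomial (bigD1 i) //= eqxx big1 ?Rmult_1_r ?pow_1 //.
by move=> k /negbTE ->.
Qed.

Lemma monomial_coneD f g :
  monomial_cone f -> monomial_cone g -> monomial_cone (fun s => f s + g s).
Proof.
move=> [I [c [m [c0 Ef]]]] [I' [c' [m' [c'0 Eg]]]].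
exists (I + I')%type, (fun x => match x with inl a => c a | inr b => c' b end),
  (fun x => match x with inl a => m a | inr b => m' b end); split.
  by case.
by move=> s; rewrite big_sumType Ef Eg.
Qed.

Lemma monomial_coneZ (a : R) f :
  0 <= a -> monomial_cone f -> monomial_cone (fun s => a * f s).
Proof.
move=> a0 [I [c [m [c0 Ef]]]].
exists I, (fun x => a * c x), m; split => [x | s]; first exact: Rmult_le_pos.
by rewrite Ef -rsum_scale; apply: eq_bigr => x _; ring.
Qed.

Lemma monomial_coneM f g :
  monomial_cone f -> monomial_cone g -> monomial_cone (fun s => f s * g s).
Proof.
move=> [I [c [m [c0 Ef]]]] [I' [c' [m' [c'0 Eg]]]].
exists (I * I')%type, (fun x => c x.1 * c' x.2),
  (fun x i => (m x.1 i + m' x.2 i)%nat); split.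
  by move=> x; apply: Rmult_le_pos.
move=> s; rewrite Ef Eg big_distrl /=.
under eq_bigr do rewrite big_distrr.
by rewrite pair_big /=; apply: eq_bigr => x _; rewrite monomialD; ring.
Qed.

Lemma monomial_cone_rprod (J : finType) (F : J -> config N -> R) :
  (forall j, monomial_cone (F j)) -> monomial_cone (fun s => \rprod_(j : J) F j s).
Proof.
move=> FP; suff: forall r : seq J,
  monomial_cone (fun s => \big[Rmult/R1]_(j <- r) F j s) by apply.
elim=> [|j r IH].
  by apply: monomial_cone_ext monomial_cone1 _ => s; rewrite big_nil.
by apply: monomial_cone_ext (monomial_coneM (FP j) IH) _ => s; rewrite big_cons.
Qed.

(* [exp (K x y) = cosh K + sinh K * x y] for spins [x, y], and [sinh K >= 0]. *)
Lemma monomial_cone_exp_pair (K : R) (i j : 'I_N) :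
  0 <= K -> monomial_cone (fun s => exp (K * spin s i * spin s j)).
Proof.
move=> K0; have := exp_pos K; have := exp_pos (- K).
have : exp (- K) <= exp K by apply: exp_le_compat; lra.
move=> ch ep em.
have cosh0 : 0 <= (exp K + exp (- K)) / 2 by lra.
have sinh0 : 0 <= (exp K - exp (- K)) / 2 by lra.
have E e : e = 1 \/ e = -1 ->
    exp (K * e) = (exp K + exp (- K)) / 2 * 1 + (exp K - exp (- K)) / 2 * e.
  by case=> ->; [rewrite Rmult_1_r | replace (K * -1) with (- K) by ring]; field.
apply: monomial_cone_ext (monomial_coneD (monomial_coneZ cosh0 monomial_cone1)
  (monomial_coneZ sinh0 (monomial_coneM (monomial_cone_spin i) (monomial_cone_spin j)))) _.
move=> s /=; rewrite Rmult_assoc E //.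
by case: (spin_cases s i) => ->; case: (spin_cases s j) => ->; [left | right | right | left]; ring.
Qed.

End MonomialCone.

Lemma griffiths (N : nat) (K : 'I_N -> 'I_N -> R) (I : finType) (a : I -> 'I_N) :
  (forall i j, 0 <= K i j) ->
  0 <= \rsum_(s : config N) (spin_prod a s * exp (ising_H K s)).
Proof.
move=> K0; apply: rsum_monomial_cone_ge0; apply: monomial_coneM.
  by apply: monomial_cone_rprod => k; apply: monomial_cone_spin.
apply: (@monomial_cone_ext _
  (fun s => \rprod_(i : 'I_N) \rprod_(j : 'I_N) exp (K i j * spin s i * spin s j))).
  by do 2 apply: monomial_cone_rprod => ?; exact: monomial_cone_exp_pair.
by move=> s; rewrite /ising_H exp_rsum; apply: eq_bigr => i _; rewrite exp_rsum.
Qed.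

Lemma ising_Z_gt0 (N : nat) (J : 'I_N -> 'I_N -> R) : 0 < ising_Z J.
Proof.
rewrite /ising_Z (bigD1 [ffun _ => true]) //=.
apply: Rplus_lt_le_0_compat; first exact: exp_pos.
by apply: (big_ind (fun x => 0 <= x)) => [|x y|s _]; [lra | lra | apply: Rlt_le; apply: exp_pos].
Qed.

Lemma ising_ge0 (N : nat) (J : 'I_N -> 'I_N -> R) s : 0 <= ising J s.
Proof.
apply: Rmult_le_pos; first exact: Rlt_le (exp_pos _).
exact: Rlt_le (Rinv_0_lt_compat _ (ising_Z_gt0 J)).
Qed.

Lemma ising_sum1 (N : nat) (J : 'I_N -> 'I_N -> R) : \rsum_(s : config N) ising J s = 1.
Proof.
rewrite /ising /Rdiv (eq_bigr _ (fun s _ => Rmult_comm _ _)) rsum_scale Rinv_l //.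
by have := ising_Z_gt0 J; lra.
Qed.

Lemma expect_ising (N : nat) (J : 'I_N -> 'I_N -> R) f :
  expect (ising J) f = (\rsum_(s : config N) (exp (ising_H J s) * f s)) / ising_Z J.
Proof.
by rewrite /expect /ising /Rdiv Rmult_comm -rsum_scale; apply: eq_bigr => s _; ring.
Qed.

Definition cfg_mul (N : nat) (s r : config N) : config N := [ffun i => s i == r i].

Lemma spin_cfg_mul (N : nat) (s r : config N) i :
  spin (cfg_mul s r) i = spin s i * spin r i.
Proof. by rewrite /spin /cfg_mul ffunE; case: (s i); case: (r i) => /=; ring. Qed.

Lemma cfg_mul_inj (N : nat) (s : config N) : injective (cfg_mul s).
Proof.
have K : cancel (cfg_mul s) (cfg_mul s).
  by move=> r; apply/ffunP => i; rewrite !ffunE; case: (s i); case: (r i).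
exact: can_inj K.
Qed.

Lemma spin_prod_cfg_mul (N : nat) (I : finType) (a : I -> 'I_N) s r :
  spin_prod a (cfg_mul s r) = spin_prod a s * spin_prod a r.
Proof. by rewrite /spin_prod -big_split; apply: eq_bigr => k _; exact: spin_cfg_mul. Qed.

Lemma ising_H_cfg_mul (N : nat) (J : 'I_N -> 'I_N -> R) s r :
  ising_H (fun i j => Rabs (J i j)) s + ising_H J (cfg_mul s r) =
  ising_H (fun i j => Rabs (J i j) + J i j * spin r i * spin r j) s.
Proof.
rewrite /ising_H -big_split /=; apply: eq_bigr => i _.
by rewrite -big_split /=; apply: eq_bigr => j _; rewrite !spin_cfg_mul; ring.
Qed.

Lemma rsum_cross (I : finType) (A u v : I -> R) (e : R) :
  \rsum_(s : I) \rsum_(t : I) ((A s - e * A t) * (u s * v t)) =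
  (\rsum_(s : I) (u s * A s)) * (\rsum_(t : I) v t)
    - e * (\rsum_(t : I) (v t * A t)) * (\rsum_(s : I) u s).
Proof.
have E1 : ((\rsum_(s : I) (u s * A s)) * (\rsum_(t : I) v t) =
    \rsum_(s : I) \rsum_(t : I) (u s * A s * v t))%R.
  by rewrite -rsum_scale_r; apply: eq_bigr => s _; rewrite rsum_scale.
have E2 : ((\rsum_(t : I) (v t * A t)) * (\rsum_(s : I) u s) =
    \rsum_(s : I) \rsum_(t : I) (v t * A t * u s))%R.
  by rewrite exchange_big -rsum_scale_r; apply: eq_bigr => t _; rewrite rsum_scale.
rewrite E1 Rmult_assoc E2 -rsum_scale -rsum_sub; apply: eq_bigr => s _.
by rewrite -rsum_scale -rsum_sub; apply: eq_bigr => t _; ring.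
Qed.

(* Substituting [t = cfg_mul s r] turns the duplicated system into a system in
   [s] with couplings [|J| + J r_i r_j >= 0], to which Griffiths applies. *)
Lemma ginibre_cross_ge0 (N : nat) (J : 'I_N -> 'I_N -> R) (I : finType)
    (a : I -> 'I_N) (e : R) :
  Rabs e <= 1 ->
  0 <= \rsum_(s : config N) \rsum_(t : config N)
        ((spin_prod a s - e * spin_prod a t) *
         (exp (ising_H (fun i j => Rabs (J i j)) s) * exp (ising_H J t))).
Proof.
move=> e1.
rewrite (eq_bigr (fun s => \rsum_(r : config N)
   ((1 - e * spin_prod a r) * (spin_prod a s *
     exp (ising_H (fun i j => Rabs (J i j) + J i j * spin r i * spin r j) s))))); last first.
  move=> s _; rewrite (reindex_inj (@cfg_mul_inj _ s)) /=; apply: eq_bigr => r _.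
  by rewrite spin_prod_cfg_mul -ising_H_cfg_mul exp_plus; ring.
rewrite exchange_big /=; apply: rsum_ge0 => r; rewrite rsum_scale.
apply: Rmult_le_pos.
  have := Rabs_spin_prod_le1 a r; have := Rle_abs (e * spin_prod a r).
  rewrite Rabs_mult; have := Rabs_pos e; have := Rabs_pos (spin_prod a r); nra.
apply: griffiths => i j.
by case: (spin_cases r i) => ->; case: (spin_cases r j) => ->;
  have := Rle_abs (J i j); have := Rle_abs (- J i j); rewrite Rabs_Ropp; lra.
Qed.

Lemma ginibre (N : nat) (J : 'I_N -> 'I_N -> R) (I : finType) (a : I -> 'I_N) :
  Rabs (expect (ising J) (spin_prod a)) <=
  expect (ising (fun i j => Rabs (J i j))) (spin_prod a).
Proof.
rewrite !expect_ising.
set Ja := fun i j => Rabs (J i j).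
set NJ := \rsum_(s : config N) _; set NA := \rsum_(s : config N) _.
have ZJ := ising_Z_gt0 J; have ZA := ising_Z_gt0 Ja.
have cross e : Rabs e <= 1 -> 0 <= NA * ising_Z J - e * NJ * ising_Z Ja.
  by move=> /(ginibre_cross_ge0 J a); rewrite rsum_cross.
have := cross 1; have := cross (-1); rewrite Rabs_Ropp Rabs_R1.
move=> /(_ (Rle_refl _)) Hm /(_ (Rle_refl _)) Hp.
rewrite /Rdiv Rabs_mult Rabs_inv (Rabs_right (ising_Z J)); last lra.
apply: (Rmult_le_reg_r (ising_Z J * ising_Z Ja)); first nra.
have -> : Rabs NJ * / ising_Z J * (ising_Z J * ising_Z Ja) = Rabs NJ * ising_Z Ja by field; lra.
have -> : NA * / ising_Z Ja * (ising_Z J * ising_Z Ja) = NA * ising_Z J by field; lra.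
by case: (Rle_dec 0 NJ) => h; [rewrite Rabs_right | rewrite Rabs_left]; lra.
Qed.

Lemma hamming_sym (N : nat) (x y : config N) : hamming x y = hamming y x.
Proof.
rewrite /hamming; have -> // : [set i | x i != y i] = [set i | y i != x i].
by apply/setP => i; rewrite !inE eq_sym.
Qed.

Lemma hamming_le (N : nat) (x y : config N) : (hamming x y <= N)%N.
Proof. by apply: leq_trans (max_card _) _; rewrite card_ord. Qed.

Lemma hamming_eq0 (N : nat) (x y : config N) : hamming x y = 0%N -> x = y.
Proof.
rewrite /hamming => /eqP; rewrite cards_eq0 => /eqP E.
apply/ffunP => i; apply/eqP/negPn/negP => xy.
have : i \in [set i | x i != y i] by rewrite inE.
by rewrite E inE.
Qed.

Lemma hamming_step (N : nat) (n : nat) (x y : config N) :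
  hamming x y = n.+1 -> exists x', hamming x x' = 1%N /\ hamming x' y = n.
Proof.
move=> xy; have : (0 < #|[set i | x i != y i]|)%N by rewrite -/(hamming x y) xy.
case/card_gt0P => i; rewrite inE => xyi.
pose x' : config N := [ffun k => if k == i then y k else x k].
exists x'; split.
  rewrite /hamming -(cards1 i); have -> // : [set k | x k != x' k] = [set i].
  by apply/setP => k; rewrite !inE ffunE; case: (k =P i) => [->|]; rewrite ?eqxx.
move: xy; rewrite /hamming (cardsD1 i) inE xyi add1n => -[<-].
have -> // : [set k | x' k != y k] = [set k | x k != y k] :\ i.
by apply/setP => k; rewrite !inE ffunE; case: (k =P i) => [->|]; rewrite ?eqxx.
Qed.

Definition edge_lipschitz (N : nat) (f : config N -> R) (L : R) : Prop :=
  forall s s' : config N, hamming s s' = 1%N -> Rabs (f s - f s') <= L.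

Lemma edge_lipschitz_le (N : nat) (f : config N -> R) (L L' : R) :
  edge_lipschitz f L -> L <= L' -> edge_lipschitz f L'.
Proof. by move=> fL LL' s s' /fL; lra. Qed.

Lemma edge_lipschitz_hamming (N : nat) (f : config N -> R) (L : R) :
  edge_lipschitz f L -> forall x y, Rabs (f x - f y) <= L * INR (hamming x y).
Proof.
move=> fL x y; have [n xy] : exists n, hamming x y = n by eexists.
rewrite xy; elim: n x xy => [|n IH] x xy.
  by rewrite (hamming_eq0 xy) Rminus_diag Rabs_R0 /=; lra.
have [x' [xx' x'y]] := hamming_step xy.
have := fL _ _ xx'; have := IH _ x'y; have := Rabs_triang (f x - f x') (f x' - f y).
by rewrite S_INR; replace (f x - f x' + (f x' - f y)) with (f x - f y) by ring; lra.
Qed.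

Section MarkovOperator.
Variables (N : nat) (P : config N -> config N -> R).

Definition markov_op (h : config N -> R) (x : config N) : R :=
  \rsum_(y : config N) (P x y * h y).

Lemma markov_op_affine (a b : R) (h : config N -> R) x :
  \rsum_(y : config N) P x y = 1 ->
  markov_op (fun y => a + b * h y) x = a + b * markov_op h x.
Proof.
move=> P1; rewrite /markov_op -{2}[a]Rmult_1_r -P1 -rsum_scale -rsum_scale -big_split /=.
by apply: eq_bigr => y _; ring.
Qed.

Lemma stationary_markov_op (pi : config N -> R) (h : config N -> R) :
  stationary pi P ->
  \rsum_(x : config N) (pi x * markov_op h x) = \rsum_(y : config N) (pi y * h y).
Proof.
move=> piP; rewrite /markov_op (eq_bigr _ (fun x _ => esym (rsum_scale _ _))) exchange_big /=.
apply: eq_bigr => y _; rewrite -(piP y) -rsum_scale_r.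
by apply: eq_bigr => x _; ring.
Qed.

Lemma stationary_markov_iter (pi : config N -> R) (h : config N -> R) t :
  stationary pi P ->
  \rsum_(x : config N) (pi x * iter t markov_op h x) = \rsum_(x : config N) (pi x * h x).
Proof. by move=> piP; elim: t => [|t IH] //=; rewrite stationary_markov_op. Qed.

(* Couple [P s] and [P s'] nearly optimally and use [edge_lipschitz_hamming]
   inside the coupling. *)
Lemma edge_lipschitz_markov_op (theta L : R) (h : config N -> R) :
  (forall s s', hamming s s' = 1%N -> W1_le (P s) (P s') theta) ->
  edge_lipschitz h L -> 0 <= L -> edge_lipschitz (markov_op h) (L * theta).
Proof.
move=> PW hL L0 s s' ss'; apply: Rle_plus_epsilon => eps eps0.
have epsL : 0 < eps / (L + 1) by apply: Rdiv_lt_0_compat; lra.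
have [g [[g0 [g1 g2]] gcost]] := PW s s' ss' _ epsL.
have -> : markov_op h s - markov_op h s' =
    \rsum_(x : config N) \rsum_(y : config N) (g x y * (h x - h y)).
  have E1 : markov_op h s = \rsum_(x : config N) \rsum_(y : config N) (g x y * h x).
    by apply: eq_bigr => x _; rewrite -g1 -rsum_scale_r.
  have E2 : markov_op h s' = \rsum_(x : config N) \rsum_(y : config N) (g x y * h y).
    by rewrite exchange_big; apply: eq_bigr => y _; rewrite -g2 -rsum_scale_r.
  rewrite E1 E2 -rsum_sub; apply: eq_bigr => x _.
  by rewrite -rsum_sub; apply: eq_bigr => y _; ring.
apply: (Rle_trans _ _ _ (Rabs_rsum_le _)).
apply: (@Rle_trans _ (L * \rsum_(x : config N) \rsum_(y : config N) (g x y * Defs.dist x y))).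
  rewrite -rsum_scale; apply: rsum_le => x; apply: (Rle_trans _ _ _ (Rabs_rsum_le _)).
  rewrite -rsum_scale; apply: rsum_le => y.
  rewrite Rabs_mult (Rabs_right (g x y)); last exact: Rle_ge (g0 x y).
  have := edge_lipschitz_hamming hL x y; have := g0 x y; rewrite /Defs.dist; nra.
have : L * (eps / (L + 1)) <= eps.
  apply: (Rmult_le_reg_r (L + 1)); first lra.
  have -> : L * (eps / (L + 1)) * (L + 1) = L * eps by field; lra.
  nra.
nra.
Qed.

Lemma edge_lipschitz_markov_iter (theta L : R) (h : config N -> R) :
  (forall s s', hamming s s' = 1%N -> W1_le (P s) (P s') theta) ->
  edge_lipschitz h L -> 0 <= L -> 0 <= theta ->
  forall t, edge_lipschitz (iter t markov_op h) (L * theta ^ t).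
Proof.
move=> PW hL L0 theta0; elim=> [|t IH] /=; first by apply: edge_lipschitz_le hL _; lra.
apply: edge_lipschitz_le (edge_lipschitz_markov_op PW IH _) _.
  by apply: Rmult_le_pos => //; apply: pow_le.
lra.
Qed.

End MarkovOperator.

Lemma exp_le_quad z : z <= 1/2 -> exp z <= 1 + z + 2 * z ^ 2.
Proof.
move=> z_le; have := exp_ineq1_le (- z); have := exp_pos z.
have : exp z * exp (- z) = 1 by rewrite -exp_plus Rplus_opp_r exp_0.
move=> ezz ez emz; apply: (Rmult_le_reg_r (1 - z)); nra.
Qed.

Lemma exp_le_tangent (a z K : R) :
  Rabs z <= 1/2 -> z ^ 2 <= K -> exp (a + z) <= exp a * (1 + z + 2 * K).
Proof.
move=> z_le zK; rewrite exp_plus; apply: Rmult_le_compat_l; first exact: Rlt_le (exp_pos a).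
by have := exp_le_quad (Rle_trans _ _ _ (Rle_abs z) z_le); lra.
Qed.

Lemma markov_op_le (N : nat) (P : config N -> config N -> R) (f g : config N -> R) x :
  (forall y, 0 <= P x y) -> (forall y, P x y <> 0 -> f y <= g y) ->
  markov_op P f x <= markov_op P g x.
Proof.
move=> P0 fg; apply: rsum_le => y.
by case: (Req_dec (P x y) 0) => [-> | /fg]; [lra | apply: Rmult_le_compat_l].
Qed.

Section SingleSiteKernel.
Variables (N : nat) (P : config N -> config N -> R).
Hypotheses (PM : markov_kernel P) (P1 : single_site P).

Lemma single_site_lipschitz (h : config N -> R) (L : R) x y :
  edge_lipschitz h L -> 0 <= L -> P x y <> 0 -> Rabs (h y - h x) <= L.
Proof.
move=> hL L0 /P1 xy; have := edge_lipschitz_hamming hL y x.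
have : INR (hamming y x) <= 1 by rewrite hamming_sym; apply: (le_INR _ 1); apply/leP.
have := pos_INR (hamming y x); nra.
Qed.

Lemma markov_op_dev (h : config N -> R) (L : R) x :
  edge_lipschitz h L -> 0 <= L -> Rabs (markov_op P h x - h x) <= L.
Proof.
case: PM => P0 Psum hL L0.
have -> : markov_op P h x - h x = markov_op P (fun y => - h x + 1 * h y) x.
  by rewrite markov_op_affine //; ring.
apply: (Rle_trans _ _ _ (Rabs_rsum_le _)).
apply: (@Rle_trans _ (\rsum_(y : config N) (L * P x y))); last by rewrite rsum_scale Psum; lra.
apply: rsum_le => y; rewrite Rabs_mult Rabs_right; last exact: Rle_ge.
case: (Req_dec (P x y) 0) => [->|/(single_site_lipschitz hL L0) dev]; first lra.
by rewrite Rmult_comm; apply: Rmult_le_compat_r => //; replace (- h x + 1 * h y) with (h y - h x) by ring.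
Qed.

(* Hoeffding's lemma for one step: on the support of [P x], [h] stays within
   [2 L] of its mean [m]. *)
Lemma markov_op_exp_le (h : config N -> R) (L lam : R) x :
  edge_lipschitz h L -> 0 <= L -> Rabs lam * L <= 1/4 ->
  markov_op P (fun y => exp (lam * h y)) x <=
  exp (lam * markov_op P h x) * exp (8 * lam ^ 2 * L ^ 2).
Proof.
case: PM => P0 Psum hL L0 lamL; set m := markov_op P h x; set c := exp (lam * m).
have c0 : 0 < c by exact: exp_pos.
apply: (@Rle_trans _ (markov_op P (fun y => (c * (1 + 8 * lam ^ 2 * L ^ 2) - c * lam * m)
                                           + (c * lam) * h y) x)).
  apply: markov_op_le => // y Pxy.
  have dev : Rabs (h y - m) <= 2 * L.
    have := single_site_lipschitz hL L0 Pxy.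
    have := markov_op_dev x hL L0; rewrite -/m Rabs_minus_sym.
    have := Rabs_triang (h y - h x) (h x - m).
    by replace (h y - h x + (h x - m)) with (h y - m) by ring; lra.
  have z_le : Rabs (lam * (h y - m)) <= 1/2.
    by rewrite Rabs_mult; have := Rabs_pos lam; have := Rabs_pos (h y - m); nra.
  have z2 : (lam * (h y - m)) ^ 2 <= 4 * lam ^ 2 * L ^ 2.
    have : (h y - m) ^ 2 <= (2 * L) ^ 2.
      by rewrite -pow2_abs; apply: pow_incr; split; [exact: Rabs_pos | exact: dev].
    by rewrite Rpow_mult_distr; have := pow2_ge_0 lam; nra.
  have := exp_le_tangent (lam * m) z_le z2.
  by rewrite -/c; replace (lam * m + lam * (h y - m)) with (lam * h y) by ring; nra.
rewrite markov_op_affine // -/m.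
have := exp_ineq1_le (8 * lam ^ 2 * L ^ 2); nra.
Qed.

End SingleSiteKernel.

Lemma geom_sq_le_inv (theta : R) (T : nat) :
  0 <= theta < 1 -> (1 - (theta ^ 2) ^ T) / (1 - theta ^ 2) <= / (1 - theta).
Proof.
move=> theta01; have q0 : 0 <= (theta ^ 2) ^ T by apply: pow_le; nra.
have q1 : 0 < 1 - theta ^ 2 by nra.
apply: (Rmult_le_reg_r (1 - theta ^ 2)) => //.
rewrite /Rdiv Rmult_assoc Rinv_l; last lra.
apply: (Rmult_le_reg_l (1 - theta)); first lra.
by rewrite Rmult_1_r -Rmult_assoc Rinv_r; [nra | lra].
Qed.

Lemma centered_abs_le (I : finType) (pi h : I -> R) (L : R) :
  (forall i, 0 <= pi i) -> \rsum_(i : I) pi i = 1 -> \rsum_(i : I) (pi i * h i) = 0 ->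
  (forall i j, Rabs (h i - h j) <= L) -> forall i, Rabs (h i) <= L.
Proof.
move=> pi0 pi1 h0 hL i.
have -> : h i = \rsum_(j : I) (pi j * (h i - h j)).
  by rewrite (eq_bigr _ (fun j _ => Rmult_minus_distr_l _ _ _)) rsum_sub
     (eq_bigr _ (fun j _ => Rmult_comm _ _)) rsum_scale pi1 h0; ring.
apply: (Rle_trans _ _ _ (Rabs_rsum_le _)).
rewrite (eq_bigr (fun j => pi j * Rabs (h i - h j))); first exact: rsum_prob_le.
by move=> j _; rewrite Rabs_mult Rabs_right //; exact: Rle_ge.
Qed.

Section ContractingChain.
Variables (N : nat) (pi : config N -> R) (P : config N -> config N -> R) (theta : R).
Hypotheses (PM : markov_kernel P) (Pss : single_site P) (piP : stationary pi P).
Hypothesis PW : forall s s', hamming s s' = 1%N -> W1_le (P s) (P s') theta.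
Hypotheses (theta01 : 0 <= theta < 1) (pi0 : forall x, 0 <= pi x).

(* Peeling off one step of the chain at a time: the Lipschitz constant of the
   [T]-th iterate is [L theta^T], so the variance proxies sum geometrically. *)
Lemma mgf_le_iter (L lam : R) (h : config N -> R) :
  edge_lipschitz h L -> 0 <= L -> Rabs lam * L <= 1/4 ->
  forall T, \rsum_(x : config N) (pi x * exp (lam * h x)) <=
     (\rsum_(x : config N) (pi x * exp (lam * iter T (markov_op P) h x))) *
     exp (8 * lam ^ 2 * L ^ 2 * ((1 - (theta ^ 2) ^ T) / (1 - theta ^ 2))).
Proof.
move=> hL L0 lamL; have q1 : 1 - theta ^ 2 <> 0 by nra.
elim=> [|T IH].
  by rewrite /Rdiv /= Rminus_diag Rmult_0_l Rmult_0_r exp_0 Rmult_1_r; lra.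
apply: (Rle_trans _ _ _ IH).
have thT : 0 <= theta ^ T <= 1.
  by split; [apply: pow_le | rewrite -(pow1 T); apply: pow_incr]; lra.
have hTL := edge_lipschitz_markov_iter PW hL L0 (proj1 theta01) T.
rewrite -(stationary_markov_op (fun y => exp (lam * iter T (markov_op P) h y)) piP).
have -> : (1 - (theta ^ 2) ^ T.+1) / (1 - theta ^ 2) =
    (1 - (theta ^ 2) ^ T) / (1 - theta ^ 2) + (theta ^ T) ^ 2.
  have -> : (theta ^ T) ^ 2 = (theta ^ 2) ^ T by rewrite -!pow_mult Nat.mul_comm.
  by rewrite /=; field; nra.
rewrite Rmult_plus_distr_l exp_plus [exp _ * _]Rmult_comm -Rmult_assoc.
apply: Rmult_le_compat_r; first exact: Rlt_le (exp_pos _).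
rewrite -rsum_scale_r; apply: rsum_le => x; rewrite Rmult_assoc.
apply: Rmult_le_compat_l => //; rewrite iterS.
replace (8 * lam ^ 2 * L ^ 2 * (theta ^ T) ^ 2) with (8 * lam ^ 2 * (L * theta ^ T) ^ 2) by ring.
apply: markov_op_exp_le hTL _ _ => //; first exact: Rmult_le_pos L0 (proj1 thT).
by have := Rabs_pos lam; nra.
Qed.

(* After [T] steps with [theta^T N <= 1] the iterate has oscillation at most [L],
   hence is bounded by [L] since it is centred. *)
Lemma mgf_le (L lam : R) (h : config N -> R) :
  (0 < N)%N -> \rsum_(x : config N) pi x = 1 -> \rsum_(x : config N) (pi x * h x) = 0 ->
  edge_lipschitz h L -> 0 <= L -> Rabs lam * L <= 1/4 ->
  \rsum_(x : config N) (pi x * exp (lam * h x)) <=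
  exp (1/4 + 8 * lam ^ 2 * L ^ 2 / (1 - theta)).
Proof.
move=> N0 pi1 h0 hL L0 lamL.
have N0' : 0 < INR N by apply: lt_0_INR; apply/ltP.
have [T thT] : exists T, theta ^ T < / INR N.
  have th1 : Rabs theta < 1 by rewrite Rabs_right; lra.
  have [T HT] := pow_lt_1_zero theta th1 (/ INR N) (Rinv_0_lt_compat _ N0').
  by exists T; have := HT T (le_n _); rewrite Rabs_right //; apply/Rle_ge/pow_le; lra.
have thTN : theta ^ T * INR N <= 1.
  by rewrite -(Rinv_l (INR N)); [apply/Rlt_le/Rmult_lt_compat_r | lra].
set hT := iter T (markov_op P) h.
have hT_osc x y : Rabs (hT x - hT y) <= L.
  apply: (Rle_trans _ _ _ (edge_lipschitz_hamming
    (edge_lipschitz_markov_iter PW hL L0 (proj1 theta01) T) x y)).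
  have : INR (hamming x y) <= INR N by apply/le_INR/leP/hamming_le.
  have := pow_le _ T (proj1 theta01) => thT0 hN.
  have : theta ^ T * INR (hamming x y) <= 1 by nra.
  by rewrite Rmult_assoc; nra.
have hT0 : \rsum_(x : config N) (pi x * hT x) = 0 by rewrite stationary_markov_iter.
have hT_bd := centered_abs_le pi0 pi1 hT0 hT_osc.
apply: (Rle_trans _ _ _ (mgf_le_iter hL L0 lamL T)); rewrite exp_plus.
apply: Rmult_le_compat.
- by apply: rsum_ge0 => x; apply/Rmult_le_pos/Rlt_le/exp_pos.
- exact: Rlt_le (exp_pos _).
- apply: rsum_prob_le => // x; apply: exp_le_compat; rewrite -/hT.
  have := Rle_abs (lam * hT x); rewrite Rabs_mult.
  have := hT_bd x; have := Rabs_pos lam; have := Rabs_pos (hT x); nra.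
- apply: exp_le_compat; rewrite /Rdiv; apply: Rmult_le_compat_l; last exact: geom_sq_le_inv.
  by have := pow2_ge_0 lam; have := pow2_ge_0 L; nra.
Qed.

End ContractingChain.

Definition magnet (N : nat) (s : config N) : R := \rsum_(i : 'I_N) spin s i.

Lemma Rabs_magnet_sub_le (N : nat) (s s' : config N) :
  Rabs (magnet s - magnet s') <= 2 * INR (hamming s s').
Proof.
rewrite /magnet -rsum_sub; apply: (Rle_trans _ _ _ (Rabs_rsum_le _)).
have -> : \rsum_(i : 'I_N) Rabs (spin s i - spin s' i) =
    \big[Rplus/R0]_(i in [set k | s k != s' k]) 2.
  rewrite [RHS]big_mkcond; apply: eq_bigr => i _; rewrite inE /spin.
  case: (s i); case: (s' i) => /=; rewrite ?Rminus_diag ?Rabs_R0 //.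
  - by rewrite Rabs_right; lra.
  - by rewrite Rabs_left; lra.
by rewrite big_const iter_Rplus /hamming; apply: Req_le; ring.
Qed.

Lemma magnet_lipschitz (N : nat) : edge_lipschitz (@magnet N) 2.
Proof. by move=> s s' ss'; have := Rabs_magnet_sub_le s s'; rewrite ss' /=; lra. Qed.

Lemma Rabs_magnet_le (N : nat) (s : config N) : Rabs (magnet s) <= INR N.
Proof.
apply: (Rle_trans _ _ _ (Rabs_rsum_le _)).
by rewrite (eq_bigr _ (fun i _ => Rabs_spin s i)) big_const_ord iter_Rplus; lra.
Qed.

Definition cfg_flip (N : nat) (s : config N) : config N := [ffun i => ~~ s i].

Lemma spin_cfg_flip (N : nat) (s : config N) i : spin (cfg_flip s) i = - spin s i.
Proof. by rewrite /spin ffunE; case: (s i) => /=; ring. Qed.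

Lemma cfg_flip_inj (N : nat) : injective (@cfg_flip N).
Proof.
by apply: (can_inj (g := @cfg_flip N)) => s; apply/ffunP => i; rewrite !ffunE negbK.
Qed.

Lemma expect_magnet_ising (N : nat) (J : 'I_N -> 'I_N -> R) :
  \rsum_(s : config N) (ising J s * magnet s) = 0.
Proof.
suff : \rsum_(s : config N) (ising J s * magnet s) =
       - \rsum_(s : config N) (ising J s * magnet s) by lra.
rewrite {1}(reindex_inj (@cfg_flip_inj N)) /= -rsum_opp; apply: eq_bigr => s _.
have -> : ising J (cfg_flip s) = ising J s.
  rewrite /ising /ising_H; congr (exp _ / _); apply: eq_bigr => i _.
  by apply: eq_bigr => j _; rewrite !spin_cfg_flip; ring.
have -> : magnet (cfg_flip s) = - magnet s.
  by rewrite /magnet -rsum_opp; apply: eq_bigr => i _; exact: spin_cfg_flip.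
ring.
Qed.

Lemma contraction_rate_ge0 (N : nat) (P : config N -> config N -> R) (theta : R) :
  (0 < N)%N ->
  (forall s s', hamming s s' = 1%N -> W1_le (P s) (P s') theta) -> 0 <= theta.
Proof.
move=> N0 PW; pose i0 : 'I_N := Ordinal N0.
pose s1 : config N := [ffun i => i != i0].
have ss1 : hamming [ffun _ => true] s1 = 1%N.
  rewrite /hamming -(cards1 i0); have -> // : [set i | [ffun _ => true] i != s1 i] = [set i0].
  by apply/setP => i; rewrite !inE !ffunE; case: (i =P i0).
apply: Rnot_lt_le => theta0.
have [g [[g0 _] gcost]] := PW _ _ ss1 (- theta / 2) ltac:(lra).
suff : 0 <= \rsum_(x : config N) \rsum_(y : config N) (g x y * Defs.dist x y) by lra.
by do 2 apply: rsum_ge0 => ?; apply: Rmult_le_pos (g0 _ _) (pos_INR _).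
Qed.

Lemma exp_pow (y : R) (n : nat) : exp y ^ n = exp (INR n * y).
Proof.
elim: n => [|n IH]; first by rewrite /= Rmult_0_l exp_0.
by rewrite -tech_pow_Rmult IH -exp_plus S_INR; f_equal; ring.
Qed.

(* [x / p <= exp (x / p)], raised to the power [p]. *)
Lemma pow_le_exp (x : R) (p : nat) : 0 <= x -> (0 < p)%N -> x ^ p <= INR p ^ p * exp x.
Proof.
move=> x0 p0; have p0' : 0 < INR p by apply/lt_0_INR/ltP.
have : (x / INR p) ^ p <= exp (x / INR p) ^ p.
  apply: pow_incr; split; last by have := exp_ineq1_le (x / INR p); lra.
  exact: Rmult_le_pos x0 (Rlt_le _ _ (Rinv_0_lt_compat _ p0')).
have -> : exp (x / INR p) ^ p = exp x by rewrite exp_pow; f_equal; field; lra.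
have -> : x ^ p = INR p ^ p * (x / INR p) ^ p.
  by rewrite -Rpow_mult_distr; f_equal; field; lra.
by apply: Rmult_le_compat_l; apply: pow_le; lra.
Qed.

Lemma Rabs_pow_le_exp (x lam : R) (p : nat) : 0 < lam -> (0 < p)%N ->
  Rabs x ^ p <= (INR p / lam) ^ p * (exp (lam * x) + exp (- lam * x)).
Proof.
move=> lam0 p0.
have lp0 : 0 < lam ^ p by apply: pow_lt.
have := pow_le_exp (Rmult_le_pos _ _ (Rlt_le _ _ lam0) (Rabs_pos x)) p0.
rewrite Rpow_mult_distr /Rdiv Rpow_mult_distr pow_inv => H.
have exp_abs : exp (lam * Rabs x) <= exp (lam * x) + exp (- lam * x).
  have := exp_pos (lam * x); have := exp_pos (- lam * x).
  case: (Rle_dec 0 x) => x0; [rewrite Rabs_right | rewrite Rabs_left]; try lra.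
  by replace (lam * - x) with (- lam * x) by ring; lra.
apply: (Rmult_le_reg_l (lam ^ p)) => //.
apply: (Rle_trans _ _ _ H).
have -> : lam ^ p * (INR p ^ p * / lam ^ p * (exp (lam * x) + exp (- lam * x))) =
          INR p ^ p * (exp (lam * x) + exp (- lam * x)) by field; lra.
by apply: Rmult_le_compat_l exp_abs; apply: pow_le; apply: pos_INR.
Qed.

Section MagnetMoments.
Variables (alpha : R) (N : nat) (pi : config N -> R).
Hypotheses (alpha0 : 0 < alpha) (pi0 : forall x, 0 <= pi x)
  (pi1 : \rsum_(x : config N) pi x = 1).

Lemma magnet_moment_le_small (p : nat) : INR N < alpha ->
  \rsum_(x : config N) (pi x * Rabs (magnet x) ^ p) <= sqrt alpha ^ p * sqrt (INR N) ^ p.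
Proof.
move=> Nalpha; have N0 := pos_INR N.
apply: rsum_prob_le => // x; rewrite -Rpow_mult_distr.
apply: pow_incr; split; first exact: Rabs_pos.
apply: (Rle_trans _ _ _ (Rabs_magnet_le x)).
rewrite -{1}(sqrt_sqrt (INR N)) //; apply: Rmult_le_compat_r; first exact: sqrt_pos.
by apply: sqrt_le_1_alt; lra.
Qed.

Hypotheses (pi_magnet : \rsum_(x : config N) (pi x * magnet x) = 0)
  (pi_contr : contracting pi (1 - alpha / INR N)).

(* With [theta = 1 - alpha / N] and [L = 2] the exponent of [mgf_le] is
   [1/4 + 32 lam^2 N / alpha = 3/4]. *)
Lemma magnet_mgf_le (lam : R) : alpha <= INR N ->
  Rabs lam = sqrt alpha / (8 * sqrt (INR N)) ->
  \rsum_(x : config N) (pi x * exp (lam * magnet x)) <= 3.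
Proof.
move=> alphaN lamE; have N0 : 0 < INR N by lra.
have N0' : (0 < N)%N by apply/ltP/INR_lt; rewrite /=; lra.
case: pi_contr => th1 [P [PM [piP [Pss PW]]]].
have th0 := contraction_rate_ge0 N0' PW.
have sN := sqrt_lt_R0 _ N0; have sa := sqrt_lt_R0 _ alpha0.
have lamL : Rabs lam * 2 <= 1/4.
  rewrite lamE; apply: (Rmult_le_reg_r (8 * sqrt (INR N))); first lra.
  have -> : sqrt alpha / (8 * sqrt (INR N)) * 2 * (8 * sqrt (INR N)) = 2 * sqrt alpha
    by field; lra.
  by have := sqrt_le_1_alt _ _ alphaN; lra.
apply: (Rle_trans _ _ _ (mgf_le PM Pss piP PW (conj th0 th1) pi0 N0' pi1 pi_magnet
  (@magnet_lipschitz N) ltac:(lra) lamL)).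
have -> : 8 * lam ^ 2 * 2 ^ 2 / (1 - (1 - alpha / INR N)) = 1/2.
  have sa2 : sqrt alpha ^ 2 = alpha by rewrite -Rsqr_pow2 Rsqr_sqrt; lra.
  have sN2 : sqrt (INR N) ^ 2 = INR N by rewrite -Rsqr_pow2 Rsqr_sqrt; lra.
  rewrite -pow2_abs lamE /Rdiv Rpow_mult_distr pow_inv Rpow_mult_distr sa2 sN2.
  by field; lra.
apply: (Rle_trans _ (exp 1)); last exact: exp_le_3.
by apply: exp_le_compat; lra.
Qed.

Lemma magnet_moment_le_large (p : nat) : (0 < p)%N -> alpha <= INR N ->
  \rsum_(x : config N) (pi x * Rabs (magnet x) ^ p) <=
  6 * (8 * INR p / sqrt alpha) ^ p * sqrt (INR N) ^ p.
Proof.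
move=> p0 alphaN; have N0 : 0 < INR N by lra.
have sN := sqrt_lt_R0 _ N0; have sa := sqrt_lt_R0 _ alpha0.
set lam := sqrt alpha / (8 * sqrt (INR N)).
have lam0 : 0 < lam by apply: Rdiv_lt_0_compat; lra.
have lamE : Rabs lam = lam by apply/Rabs_right/Rle_ge/Rlt_le.
have mgf_p := magnet_mgf_le alphaN lamE.
have mgf_m := magnet_mgf_le alphaN (eq_trans (Rabs_Ropp lam) lamE).
apply: (@Rle_trans _ (\rsum_(x : config N)
    (pi x * ((INR p / lam) ^ p * (exp (lam * magnet x) + exp (- lam * magnet x)))))).
  apply: rsum_le => x; apply: Rmult_le_compat_l => //; exact: Rabs_pow_le_exp.
rewrite (eq_bigr (fun x => (INR p / lam) ^ p * (pi x * exp (lam * magnet x) +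
                                                 pi x * exp (- lam * magnet x)))); last first.
  by move=> x _; ring.
rewrite rsum_scale rsum_add.
have -> : INR p / lam = 8 * INR p / sqrt alpha * sqrt (INR N) by rewrite /lam; field; lra.
have -> : 6 * (8 * INR p / sqrt alpha) ^ p * sqrt (INR N) ^ p =
    (8 * INR p / sqrt alpha * sqrt (INR N)) ^ p * 6 by rewrite Rpow_mult_distr; ring.
apply: Rmult_le_compat_l; last by apply: Rle_trans (Rplus_le_compat _ _ _ _ mgf_p mgf_m) _; lra.
apply/pow_le/Rmult_le_pos; last exact: sqrt_pos.
by apply/Rmult_le_pos/Rlt_le/Rinv_0_lt_compat => //; have := pos_INR p; lra.
Qed.

End MagnetMoments.

Lemma magnet_moment_le (p : nat) (alpha : R) : (1 <= p)%N -> 0 < alpha ->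
  exists C : R, 0 < C /\
    forall (N : nat) (pi : config N -> R),
      (forall x, 0 <= pi x) -> \rsum_(x : config N) pi x = 1 ->
      \rsum_(x : config N) (pi x * magnet x) = 0 ->
      contracting pi (1 - alpha / INR N) ->
      \rsum_(x : config N) (pi x * Rabs (magnet x) ^ p) <= C * sqrt (INR N) ^ p.
Proof.
move=> p0 alpha0; have sa := sqrt_lt_R0 _ alpha0.
have C1 : 0 < 6 * (8 * INR p / sqrt alpha) ^ p.
  apply/Rmult_lt_0_compat/pow_lt/Rdiv_lt_0_compat => //; first lra.
  by apply: Rmult_lt_0_compat; [lra | apply: lt_0_INR; apply/ltP].
have C2 : 0 < sqrt alpha ^ p by apply: pow_lt.
exists (6 * (8 * INR p / sqrt alpha) ^ p + sqrt alpha ^ p); split; first lra.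
move=> N pi pi0 pi1 pi_magnet pi_contr; have := pow_le _ p (sqrt_pos (INR N)).
case: (Rlt_le_dec (INR N) alpha) => [small | large].
- by have := magnet_moment_le_small pi0 pi1 p small; nra.
- by have := magnet_moment_le_large alpha0 pi0 pi1 pi_magnet pi_contr p0 large; nra.
Qed.

Lemma tensor_supnorm_ge0 (N p : nat) (B : {ffun 'I_p -> 'I_N} -> R) : 0 <= tensor_supnorm B.
Proof.
apply: (big_ind (fun x => 0 <= x)) => [|x y x0 _|idx _]; first lra.
  exact: Rle_trans x0 (Rmax_l _ _).
exact: Rabs_pos.
Qed.

Lemma Rabs_le_tensor_supnorm (N p : nat) (B : {ffun 'I_p -> 'I_N} -> R) idx :
  Rabs (B idx) <= tensor_supnorm B.
Proof.
rewrite /tensor_supnorm; have : idx \in index_enum {ffun 'I_p -> 'I_N} by rewrite mem_index_enum.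
elim: (index_enum _) => [|a r IH] //; rewrite inE big_cons => /orP [/eqP <- | /IH Br].
  exact: Rmax_l.
exact: Rle_trans Br (Rmax_r _ _).
Qed.

Lemma rsum_spin_prod (N p : nat) (s : config N) :
  \rsum_(idx : {ffun 'I_p -> 'I_N}) spin_prod idx s = magnet s ^ p.
Proof.
have -> : \rsum_(idx : {ffun 'I_p -> 'I_N}) \rprod_(k : 'I_p) spin s (idx k) =
          \rprod_(k : 'I_p) \rsum_(i : 'I_N) spin s i by rewrite bigA_distr_bigA.
exact: rprod_const_ord.
Qed.

Lemma expect_tensor_poly (N p : nat) (J : 'I_N -> 'I_N -> R) (B : {ffun 'I_p -> 'I_N} -> R) :
  expect (ising J) (tensor_poly B) =
  \rsum_(idx : {ffun 'I_p -> 'I_N}) (B idx * expect (ising J) (spin_prod idx)).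
Proof.
rewrite /expect /tensor_poly (eq_bigr _ (fun s _ => esym (rsum_scale _ _))) exchange_big /=.
apply: eq_bigr => idx _; rewrite -rsum_scale; apply: eq_bigr => s _.
by rewrite [ising J s * _]Rmult_comm Rmult_assoc; congr (_ * _); apply: Rmult_comm.
Qed.

(* Ginibre reduces the coefficients to [|B|] and the couplings to [|J|]; the
   monomial sum then collapses to the [p]-th power of the magnetization. *)
Lemma Rabs_expect_tensor_poly_le (N p : nat) (J : 'I_N -> 'I_N -> R)
    (B : {ffun 'I_p -> 'I_N} -> R) :
  Rabs (expect (ising J) (tensor_poly B)) <=
  tensor_supnorm B *
  \rsum_(s : config N) (ising (fun i j => Rabs (J i j)) s * Rabs (magnet s) ^ p).
Proof.
rewrite expect_tensor_poly; apply: (Rle_trans _ _ _ (Rabs_rsum_le _)).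
apply: (@Rle_trans _ (\rsum_(idx : {ffun 'I_p -> 'I_N})
    (tensor_supnorm B * expect (ising (fun i j => Rabs (J i j))) (spin_prod idx)))).
  apply: rsum_le => idx; rewrite Rabs_mult.
  apply: Rmult_le_compat; try exact: Rabs_pos; first exact: Rabs_le_tensor_supnorm.
  exact: ginibre.
rewrite rsum_scale; apply: Rmult_le_compat_l; first exact: tensor_supnorm_ge0.
rewrite /expect exchange_big /=; apply: rsum_le => s.
rewrite rsum_scale rsum_spin_prod; apply: Rmult_le_compat_l; first exact: ising_ge0.
by rewrite RPow_abs; exact: Rle_abs.
Qed.

Theorem lemma3 :
  forall (p : nat) (alpha : R), (1 <= p)%N -> 0 < alpha ->
  exists C : R, 0 < C /\
    forall (N : nat) (J : 'I_N -> 'I_N -> R),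
      contracting (ising (fun i j => Rabs (J i j))) (1 - alpha / INR N) ->
      forall B : {ffun 'I_p -> 'I_N} -> R,
        Rabs (expect (ising J) (tensor_poly B))
          <= C * tensor_supnorm B * sqrt (INR N) ^ p.
Proof.
move=> p alpha p1 alpha0; have [C [C0 moment]] := magnet_moment_le p1 alpha0.
exists C; split => // N J contr B.
have := moment N _ (@ising_ge0 N _) (ising_sum1 _) (expect_magnet_ising _) contr.
have := Rabs_expect_tensor_poly_le J B; have := tensor_supnorm_ge0 B.
by nra.
Qed.
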